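(* Let $D$ be a tangle diagram and fix an $\mathrm{SL}_2(\mathbb{C})$-coloring $i\mapsto g_i$ of $D$. Then the set of shadow colorings of $(D,g)$ is nonempty and is in bijection with $\mathbb{C}^2\setminus\{0\}$.
   Context: Tangle diagrams: a tangle diagram $D$ is an oriented tangle diagram in the square $[0,1]^2$, viewed as a 4-valent graph with crossings. Segments are the edges of the graph; a strand is cut at every crossing, whether over or under. Regions are the connected components of the complement of the graph in the square. Above and below: for a segment $i$, $i^{\uparrow}$ is the region on the left of $i$ with respect to its orientation and $i^{\downarrow}$ the region on its right. Crossing labels: rotate a crossing so both strands point right. The incoming segments are $1$ (upper left) and $2$ (lower left). The outgoing segments are $1'$ (lower right, continuing $1$) and $2'$ (upper right, continuing $2$). The crossing is positive if strand $1\to1'$ is over, negative if strand $2\to2'$ is over. $\mathrm{SL}_2(\mathbb{C})$-coloring: an assignment $i\mapsto g_i\in\mathrm{SL}_2(\mathbb{C})$ to segments such that: - at positive crossings, $g_{1'}=g_1$ and $g_{2'}=g_1^{-1}g_2g_1$; - at negative crossings, $g_{2'}=g_2$ and $g_{1'}=g_2g_1g_2^{-1}$. Shadow coloring of $(D,g)$: an assignment $j\mapsto u_j$ of nonzero column vectors in $\mathbb{C}^2$ to the regions such that $u_{i^{\downarrow}}=g_iu_{i^{\uparrow}}$ for every segment $i$. *)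

(* Tangle diagrams are encoded combinatorially in Morse
   position: a diagram is a bottom slice of oriented endpoints followed by a
   sequence of elementary events (crossing, cup = local minimum,
   cap = local maximum), read from bottom to top. *)
From HB Require Import structures.
From mathcomp Require Import all_boot all_order all_algebra.
From mathcomp Require Import reals complex.
Set Implicit Arguments. Unset Strict Implicit. Unset Printing Implicit Defensive.
Import Order.TTheory GRing.Theory Num.Theory.

(* Orientation of a strand point on a horizontal level line:
   true = pointing up, false = pointing down. *)

Inductive step : Type :=
  | Cross of nat & bool  (* Cross k overA : the strands at positions k, k+1
                            cross; overA = true iff the strand going from
                            position k (below) to position k+1 (above) is
                            the over-strand *)
  | Cup of nat & bool    (* Cup k o : a local minimum creating two new points
                            at positions k, k+1 with orientations o, ~~o *)
  | Cap of nat.          (* Cap k : a local maximum joining positions k, k+1 *)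

Definition apply_step (st : step) (s : seq bool) : seq bool :=
  match st with
  | Cross k _ => take k s ++ [:: nth false s k.+1; nth false s k] ++ drop k.+2 s
  | Cup k o => take k s ++ [:: o; ~~ o] ++ drop k s
  | Cap k => take k s ++ drop k.+2 s
  end.

Definition step_valid (st : step) (s : seq bool) : bool :=
  match st with
  | Cross k _ => k.+1 < size s
  | Cup k _ => k <= size s
  | Cap k => (k.+1 < size s) && (nth false s k != nth false s k.+1)
  end.

Record diagram : Type := Diagram { bot : seq bool; steps : seq step }.

Definition height (D : diagram) : nat := size (steps D).
Definition stepn (D : diagram) (h : nat) : step := nth (Cap 0) (steps D) h.

(* the level line at height h (0 = bottom boundary, height D = top) *)
Definition slice (D : diagram) (h : nat) : seq bool :=
  foldl (fun s st => apply_step st s) (bot D) (take h (steps D)).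

Definition wf_diagram (D : diagram) : Prop :=
  forall h, h < height D -> step_valid (stepn D h) (slice D h).

(* Strand points (h, p): the p-th point of the level line h.  Each lies on a
   segment; segments are the classes of the identification seg_step below. *)
Definition pt_ok (D : diagram) (x : nat * nat) : bool :=
  (x.1 <= height D) && (x.2 < size (slice D x.1)).
Definition pt (D : diagram) := {x : nat * nat | pt_ok D x}.

(* Gaps (h, j): the j-th interval of the level line h (gap j lies between
   points j-1 and j).  Each lies in a region; regions are the classes of
   the identification region_step below. *)
Definition gap_ok (D : diagram) (x : nat * nat) : bool :=
  (x.1 <= height D) && (x.2 <= size (slice D x.1)).
Definition gap (D : diagram) := {x : nat * nat | gap_ok D x}.

(* where point p below an event continues above it (None: cut/ended) *)
Definition pt_cont (st : step) (p : nat) : option nat :=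
  match st with
  | Cross k _ => if (p == k) || (p == k.+1) then None else Some p
  | Cup k _ => Some (if p < k then p else p.+2)
  | Cap k => if p < k then Some p else if p <= k.+1 then None else Some (p - 2)
  end.

(* the gaps above an event belonging to the same region as gap j below *)
Definition gap_cont (st : step) (j : nat) : seq nat :=
  match st with
  | Cross k _ => if j == k.+1 then [::] else [:: j]
  | Cup k _ => if j < k then [:: j] else if j == k then [:: k; k.+2]
               else [:: j.+2]
  | Cap k => if j < k then [:: j] else if j == k then [:: k]
             else if j == k.+1 then [::] else if j == k.+2 then [:: k]
             else [:: j - 2]
  end.

(* elementary identifications of strand points lying on the same segment
   (segments are cut at every crossing, over or under) *)
Definition seg_step (D : diagram) (x y : nat * nat) : Prop :=
  (exists h p q, [/\ h < height D, pt_cont (stepn D h) p = Some q,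
                     x = (h, p) & y = (h.+1, q)])
  \/ (exists h k o, [/\ h < height D, stepn D h = Cup k o,
                       x = (h.+1, k) & y = (h.+1, k.+1)])
  \/ (exists h k, [/\ h < height D, stepn D h = Cap k,
                     x = (h, k) & y = (h, k.+1)]).

Definition region_step (D : diagram) (x y : nat * nat) : Prop :=
  exists h j q, [/\ h < height D, q \in gap_cont (stepn D h) j,
                   x = (h, j) & y = (h.+1, q)].

Definition orient (D : diagram) (x : nat * nat) : bool :=
  nth false (slice D x.1) x.2.

(* i^up = region on the left of the segment, i^down = region on its right *)
Definition gap_up (D : diagram) (x : nat * nat) : nat * nat :=
  (x.1, if orient D x then x.2 else x.2.+1).
Definition gap_down (D : diagram) (x : nat * nat) : nat * nat :=
  (x.1, if orient D x then x.2.+1 else x.2).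

(* Strand A runs between
   (h,k) and (h+1,k+1), strand B between (h,k+1) and (h+1,k).  After rotating
   so both strands point right, strand 1 (upper left -> lower right) is A iff
   the two strands have the same vertical orientation.  Returns
   (segment 1, segment 2, segment 1', segment 2', positivity). *)
Definition cross_labels (D : diagram) (h k : nat) (overA : bool) :
    (nat * nat) * (nat * nat) * (nat * nat) * (nat * nat) * bool :=
  let a := orient D (h, k) in
  let b := orient D (h, k.+1) in
  let inA := if a then (h, k) else (h.+1, k.+1) in
  let outA := if a then (h.+1, k.+1) else (h, k) in
  let inB := if b then (h, k.+1) else (h.+1, k) in
  let outB := if b then (h.+1, k) else (h, k.+1) in
  if a == b then (inA, inB, outA, outB, overA)
  else (inB, inA, outB, outA, ~~ overA).

Section Colorings.
Variable C : fieldType.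
Local Open Scope ring_scope.

Definition SL2 : {pred 'M[C]_2} := [pred M | \det M == 1].

Definition is_SL2_coloring (D : diagram) (g : pt D -> 'M[C]_2) : Prop :=
  [/\ forall x : pt D, g x \in SL2,
      forall x y : pt D, seg_step D (val x) (val y) -> g x = g y &
      forall h k overA, (h < height D)%N -> stepn D h = Cross k overA ->
        forall x1 x2 x1' x2' : pt D,
        let: (i1, i2, i1', i2', pos) := cross_labels D h k overA in
        val x1 = i1 -> val x2 = i2 -> val x1' = i1' -> val x2' = i2' ->
        if pos then g x1' = g x1 /\ g x2' = invmx (g x1) *m g x2 *m g x1
        else g x2' = g x2 /\ g x1' = g x2 *m g x1 *m invmx (g x2)].

Definition is_shadow (D : diagram) (g : pt D -> 'M[C]_2)
    (u : gap D -> 'cV[C]_2) : Prop :=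
  [/\ forall r : gap D, u r != 0,
      forall r s : gap D, region_step D (val r) (val s) -> u r = u s &
      forall (x : pt D) (r s : gap D),
        val r = gap_up D (val x) -> val s = gap_down D (val x) ->
        u s = g x *m u r].

End Colorings.

From HB Require Import structures.
From mathcomp Require Import all_boot all_order all_algebra.
From mathcomp Require Import reals complex zify boolp.
Set Implicit Arguments. Unset Strict Implicit. Unset Printing Implicit Defensive.
Import GRing.Theory.

(* Along the level line at height h, passing from gap p to gap p + 1 across
   the strand point p multiplies a shadow coloring by g or g^-1, according to
   whether the strand points up or down.  Hence the vector on gap j is
   T(h, j) v, where T(h, j) is the ordered product of these matrices and v is
   the vector on the bottom-left region, which contains every leftmost gap.
   Conversely, v |-> T(h, j) v is a shadow coloring for every v != 0: across
   an event the matrices of the points outside the event are unchanged, and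
   the product over the points of the event is preserved, being g g^-1 = 1 at
   cups and caps and following from g_1' g_2' = g_2 g_1 (valid for both signs)
   at crossings. *)

Lemma nth_splice (T : Type) (x0 : T) s w k m p : k <= size s ->
  nth x0 (take k s ++ w ++ drop m s) p =
  if p < k then nth x0 s p
  else if p < k + size w then nth x0 w (p - k)
  else nth x0 s (p - k - size w + m).
Proof.
move=> ks; rewrite nth_cat size_takel //; case: ltnP => [pk|kp].
  by rewrite nth_take.
rewrite nth_cat ltn_subLR // nth_drop; case: ltnP => // _.
by rewrite addnC.
Qed.

(* Every event replaces the [step_in] points from position [step_pos] on by
   the [step_out] points of [step_word]. *)
Definition step_pos (st : step) : nat :=
  match st with Cross k _ | Cup k _ | Cap k => k end.

Definition step_in (st : step) : nat := if st is Cup _ _ then 0 else 2.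

Definition step_out (st : step) : nat := if st is Cap _ then 0 else 2.

Definition step_word (st : step) (s : seq bool) : seq bool :=
  match st with
  | Cross k _ => [:: nth false s k.+1; nth false s k]
  | Cup _ o => [:: o; ~~ o]
  | Cap _ => [::]
  end.

Lemma size_step_word st s : size (step_word st s) = step_out st.
Proof. by case: st. Qed.

Lemma apply_stepE st s : apply_step st s =
  take (step_pos st) s ++ step_word st s ++ drop (step_in st + step_pos st) s.
Proof. by case: st. Qed.

Lemma step_valid_window st s :
  step_valid st s -> step_in st + step_pos st <= size s.
Proof. by case: st => [k o|k o|k] /=; try case/andP; lia. Qed.

Lemma size_apply_step st s : step_valid st s ->
  size (apply_step st s) + step_in st = size s + step_out st.
Proof.
move=> /step_valid_window window.
rewrite apply_stepE !size_cat size_step_word size_drop size_takel; lia.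
Qed.

Lemma nth_apply_step_left st s p : step_valid st s -> p < step_pos st ->
  nth false (apply_step st s) p = nth false s p.
Proof.
move=> /step_valid_window window pk.
by rewrite apply_stepE nth_splice ?pk //; lia.
Qed.

Lemma nth_apply_step_window st s p : step_valid st s -> p < step_out st ->
  nth false (apply_step st s) (p + step_pos st) = nth false (step_word st s) p.
Proof.
move=> /step_valid_window window pb.
rewrite apply_stepE nth_splice ?size_step_word; last by lia.
by rewrite ltnNge leq_addl /= addnK ifT //; lia.
Qed.

Lemma nth_apply_step_right st s p : step_valid st s ->
  nth false (apply_step st s) (p + step_out st + step_pos st) =
  nth false s (p + step_in st + step_pos st).
Proof.
move=> /step_valid_window window.
rewrite apply_stepE nth_splice ?size_step_word; last by lia.
rewrite ltnNge leq_addl /= ifF; [congr nth | ]; lia.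
Qed.

Lemma pt_cont_left st p : p < step_pos st -> pt_cont st p = Some p.
Proof.
by case: st => [k o|k o|k] /= pk; [case: ifP|rewrite pk|rewrite pk] => //; lia.
Qed.

Lemma pt_cont_right st p :
  pt_cont st (p + step_in st + step_pos st) = Some (p + step_out st + step_pos st).
Proof.
by case: st => [k o|k o|k] /=; repeat case: ifP; try lia; move=> *; congr Some; lia.
Qed.

Lemma gap_cont_spec st j q : q \in gap_cont st j ->
  (j <= step_pos st /\ q = j) \/
  exists n, j = n + step_in st + step_pos st /\ q = n + step_out st + step_pos st.
Proof.
case: st => [k o|k o|k] /=; repeat case: ifP => ?;
  rewrite ?in_cons ?in_nil ?orbF // => qP;
  (case/orP: qP => /eqP-> || move/eqP: qP => ->);
  (case: (leqP j k) => ?;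
   [ by (left; lia) || (right; exists 0; lia)
   | by right; first [exists (j - 2 - k); lia | exists (j - k); lia] ]).
Qed.

Lemma gap_cont0 st : 0 \in gap_cont st 0.
Proof. by case: st => [[|k] o|[|k] o|[|k]]. Qed.

Lemma slice_succ D h : h < height D ->
  slice D h.+1 = apply_step (stepn D h) (slice D h).
Proof. by move=> hD; rewrite /slice (take_nth (Cap 0)) // foldl_rcons. Qed.

Local Open Scope ring_scope.

Section RevProd.
Variable R : pzSemiRingType.
Implicit Types f : nat -> R.

Fixpoint revprod f n : R := if n is m.+1 then f m * revprod f m else 1.

Lemma eq_revprod f f' n :
  (forall p, (p < n)%N -> f p = f' p) -> revprod f n = revprod f' n.
Proof. by elim: n => //= n IHn ff'; rewrite ff' // IHn // => p /ltnW/ff'. Qed.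

Lemma revprodD f m n :
  revprod f (m + n) = revprod (fun p => f (p + n)%N) m * revprod f n.
Proof. by elim: m => [|m IHm] /=; rewrite ?mul1r // IHm mulrA. Qed.

Lemma revprod_splice f f' k a b n :
  (forall p, (p < k)%N -> f' p = f p) ->
  (forall p, (p < n)%N -> f' (p + b + k)%N = f (p + a + k)%N) ->
  revprod (fun p => f' (p + k)%N) b = revprod (fun p => f (p + k)%N) a ->
  revprod f' (n + b + k) = revprod f (n + a + k).
Proof.
move=> eq_left eq_right eq_window.
rewrite -!addnA !revprodD eq_window (eq_revprod eq_left); congr (_ * _).
by apply: eq_revprod => p /eq_right; rewrite !addnA.
Qed.

End RevProd.

Lemma revprod_unit (R : unitRingType) (f : nat -> R) n :
  (forall p, f p \is a GRing.unit) -> revprod f n \is a GRing.unit.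
Proof. by move=> fU; elim: n => [|n IHn] /=; rewrite ?unitr1 // unitrMl. Qed.

Section Transfer.
Variables (C : fieldType) (D : diagram) (g : pt D -> 'M[C]_2).
Hypothesis gP : is_SL2_coloring g.

Definition color (x : nat * nat) : 'M[C]_2 := if insub x is Some y then g y else 1.

Lemma colorE (x : pt D) : color (val x) = g x.
Proof. by rewrite /color valK. Qed.

Lemma SL2_unit (A : 'M[C]_2) : A \in @SL2 C -> A \is a GRing.unit.
Proof.
by rewrite inE => /eqP detA; rewrite -[_ \is a _]/(A \in unitmx) unitmxE detA unitr1.
Qed.

Lemma color_unit x : color x \is a GRing.unit.
Proof.
rewrite /color; case: insubP => [y _ _|_]; last exact: unitr1.
by apply: SL2_unit; case: gP.
Qed.

Lemma color_seg x y : pt_ok D x -> pt_ok D y -> seg_step D x y -> color x = color y.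
Proof.
move=> xD yD xy; case: gP => _ seg_eq _.
rewrite -[x](SubK (pt D) xD) -[y](SubK (pt D) yD) !colorE.
by apply: seg_eq; rewrite !SubK.
Qed.

Lemma color_crossing h k o : (h < height D)%N -> stepn D h = Cross k o ->
  (k.+1 < size (slice D h))%N ->
  let: (i1, i2, i1', i2', _) := cross_labels D h k o in
  color i1' * color i2' = color i2 * color i1.
Proof.
move=> hD hst kD.
have size_succ : size (slice D h.+1) = size (slice D h).
  by have := @size_apply_step (Cross k o) _ kD; rewrite slice_succ // hst /=; lia.
have corners_ok i : i \in [:: (h, k); (h, k.+1); (h.+1, k); (h.+1, k.+1)] -> pt_ok D i.
  by rewrite !inE => /or4P[] /eqP->; apply/andP; rewrite /= ?size_succ; split; lia.
case E: (cross_labels D h k o) => [[[[i1 i2] i1'] i2'] pos].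
have [ok1 ok2 ok1' ok2'] : [/\ pt_ok D i1, pt_ok D i2, pt_ok D i1' & pt_ok D i2'].
  by move: E; rewrite /cross_labels; do 2 case: orient => /=;
    case=> <- <- <- <- _; split; apply: corners_ok; rewrite !inE eqxx ?orbT.
case: gP => _ _ /(_ h k o hD hst (Sub i1 ok1) (Sub i2 ok2) (Sub i1' ok1') (Sub i2' ok2')).
rewrite E !SubK => /(_ erefl erefl erefl erefl).
rewrite -!colorE !SubK -[invmx _]/(_^-1) !mulmxE.
by case: pos {E} => -[-> ->]; rewrite ?mulrA ?mulrV ?mulrVK ?color_unit ?mul1r.
Qed.

Definition pass_mx (x : nat * nat) : 'M[C]_2 :=
  if orient D x then color x else (color x)^-1.

Definition transfer_mx (h j : nat) : 'M[C]_2 := revprod (fun p => pass_mx (h, p)) j.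

Lemma transfer_mxS h j : transfer_mx h j.+1 = pass_mx (h, j) * transfer_mx h j.
Proof. by []. Qed.

Lemma transfer_mx_unit h j : transfer_mx h j \is a GRing.unit.
Proof.
by apply: revprod_unit => p; rewrite /pass_mx; case: ifP; rewrite ?unitrV color_unit.
Qed.

Lemma pass_mxK x y : orient D x != orient D y -> color x = color y ->
  pass_mx y * pass_mx x = 1.
Proof.
rewrite /pass_mx; case: (orient D x); case: (orient D y) => // _ ->.
  by rewrite mulVr ?color_unit.
by rewrite mulrV ?color_unit.
Qed.

Lemma pass_mx_cont h p q : (h < height D)%N -> pt_cont (stepn D h) p = Some q ->
  (p < size (slice D h))%N -> (q < size (slice D h.+1))%N ->
  orient D (h.+1, q) = orient D (h, p) -> pass_mx (h.+1, q) = pass_mx (h, p).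
Proof.
move=> hD pq pD qD opq; rewrite /pass_mx opq (@color_seg (h, p) (h.+1, q)) //.
- by apply/andP; split => //; apply: ltnW.
- by apply/andP.
- by left; exists h, p, q.
Qed.

Hypothesis wfD : wf_diagram D.

Lemma pass_mx_left h p : (h < height D)%N -> (p < step_pos (stepn D h))%N ->
  pass_mx (h.+1, p) = pass_mx (h, p).
Proof.
move=> hD pk; have valid := wfD hD.
have window := step_valid_window valid; have sizeE := size_apply_step valid.
apply: pass_mx_cont; rewrite ?pt_cont_left ?slice_succ //; try lia.
by rewrite /orient /= slice_succ // nth_apply_step_left.
Qed.

Lemma pass_mx_right h p : (h < height D)%N ->
  (p + step_in (stepn D h) + step_pos (stepn D h) < size (slice D h))%N ->
  pass_mx (h.+1, p + step_out (stepn D h) + step_pos (stepn D h))%N =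
  pass_mx (h, p + step_in (stepn D h) + step_pos (stepn D h))%N.
Proof.
move=> hD pD; have valid := wfD hD; have sizeE := size_apply_step valid.
apply: pass_mx_cont; rewrite ?pt_cont_right ?slice_succ //; try lia.
by rewrite /orient /= slice_succ // nth_apply_step_right.
Qed.

Lemma orient_window h p : (h < height D)%N -> (p < step_out (stepn D h))%N ->
  orient D (h.+1, p + step_pos (stepn D h))%N =
  nth false (step_word (stepn D h) (slice D h)) p.
Proof.
by move=> hD pb; rewrite /orient /= slice_succ // (nth_apply_step_window (wfD hD) pb).
Qed.

Lemma pass_mx_crossing h k o : (h < height D)%N -> stepn D h = Cross k o ->
  pass_mx (h.+1, k.+1) * pass_mx (h.+1, k) = pass_mx (h, k.+1) * pass_mx (h, k).
Proof.
move=> hD hst; have valid := wfD hD; rewrite hst in valid.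
have := orient_window hD (p := 0); have := orient_window hD (p := 1).
rewrite hst add0n add1n /pass_mx => /(_ isT) -> /(_ isT) ->.
have := color_crossing hD hst valid; rewrite /cross_labels /orient /=.
case: (nth false _ k); case: (nth false _ k.+1) => /= rel //.
- apply: (canLR (mulrK (color_unit _))).
  by rewrite -mulrA -rel mulKr ?color_unit.
- apply: (canLR (mulKr (color_unit _))).
  by rewrite mulrA -rel mulrK ?color_unit.
- by rewrite -!invrM ?color_unit // rel.
Qed.

Lemma transfer_window h : (h < height D)%N ->
  revprod (fun p => pass_mx (h.+1, p + step_pos (stepn D h))%N) (step_out (stepn D h)) =
  revprod (fun p => pass_mx (h, p + step_pos (stepn D h))%N) (step_in (stepn D h)).
Proof.
move=> hD; have valid := wfD hD; have sizeE := size_apply_step valid.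
have := orient_window hD (p := 0); have := orient_window hD (p := 1).
rewrite -slice_succ // in sizeE; case hst: (stepn D h) valid sizeE => [k o|k o|k] /=.
- by move=> _ _ _ _; rewrite add0n add1n !mulr1; apply: pass_mx_crossing hst.
- move=> kD sizeE /(_ isT) o1 /(_ isT) o0; rewrite add0n add1n mulr1.
  apply: pass_mxK; first by rewrite o0 o1; case: (o).
  apply: color_seg; rewrite /pt_ok /= ?sizeE; try (apply/andP; split; lia).
  by right; left; exists h, k, o.
- case/andP => kD okk1 sizeE _ _; rewrite add0n add1n mulr1; symmetry.
  apply: pass_mxK; first exact: okk1.
  apply: color_seg; rewrite /pt_ok /=; try (apply/andP; split; lia).
  by right; right; exists h, k.
Qed.

Lemma transfer_mx_step h j q : (h < height D)%N -> (j <= size (slice D h))%N ->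
  q \in gap_cont (stepn D h) j -> transfer_mx h.+1 q = transfer_mx h j.
Proof.
move=> hD jD /gap_cont_spec[[jk ->] | [n [jE ->]]].
  by apply: eq_revprod => p pj; apply: pass_mx_left; lia.
rewrite jE; apply: revprod_splice (transfer_window hD) => p pn.
  by apply: pass_mx_left.
by apply: pass_mx_right; lia.
Qed.

Definition shadow_of (v : 'cV[C]_2) (r : gap D) : 'cV[C]_2 :=
  transfer_mx (val r).1 (val r).2 *m v.

Lemma shadow_of_shadow v : v != 0 -> is_shadow g (shadow_of v).
Proof.
move=> v_neq0; split.
- move=> r; apply: contra v_neq0 => /eqP uv0.
  by rewrite -(mulKmx (transfer_mx_unit (val r).1 (val r).2) v) [_ *m v]uv0 mulmx0.
- move=> r s [h [j [q [hD jq rE sE]]]]; rewrite /shadow_of rE sE /=.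
  by rewrite (transfer_mx_step hD _ jq) //; have := valP r; rewrite rE => /andP[].
- move=> [[h p] xD] r s rE sE; rewrite /shadow_of rE sE /gap_up /gap_down /=.
  rewrite -(colorE (Sub (h, p) xD)) /=.
  case o: (orient D (h, p)); rewrite /= transfer_mxS mulmxA mulmxE /pass_mx o //.
  by rewrite mulVKr ?color_unit.
Qed.

Lemma gap0_ok : gap_ok D (0, 0).
Proof. by []. Qed.

Definition gap0 : gap D := Sub (0, 0)%N gap0_ok.

Lemma shadow_of_gap0 v : shadow_of v gap0 = v.
Proof. exact: mul1mx. Qed.

Lemma shadow_leftmost u : is_shadow g u ->
  forall h (rD : gap_ok D (h, 0)), u (Sub (h, 0)%N rD) = u gap0.
Proof.
case=> _ region_eq _; elim=> [|h IHh] rD; first by congr u; apply: val_inj.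
have hD : (h < height D)%N by case/andP: rD.
have r'D : gap_ok D (h, 0) by rewrite /gap_ok /= ltnW.
rewrite -(IHh r'D); symmetry; apply: region_eq; rewrite !SubK.
by exists h, 0%N, 0%N; split => //; apply: gap_cont0.
Qed.

Lemma shadowE u : is_shadow g u -> u = shadow_of (u gap0).
Proof.
move=> uS; have [_ _ seg_eq] := uS; apply/funext => -[[h j] rD].
rewrite /shadow_of /=; elim: j rD => [|j IHj] rD.
  by rewrite (shadow_leftmost uS) /transfer_mx mul1mx.
have [hD jD] := andP rD; have xD : pt_ok D (h, j) by apply/andP.
have r'D : gap_ok D (h, j) by rewrite /gap_ok hD ltnW.
rewrite transfer_mxS -mulmxE -mulmxA -(IHj r'D).
have gU : g (Sub (h, j) xD) \is a GRing.unit by rewrite -colorE color_unit.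
rewrite /pass_mx (colorE (Sub (h, j) xD)).
have seg_eq' := seg_eq (Sub (h, j) xD); rewrite SubK /gap_up /gap_down in seg_eq'.
case: (orient D (h, j)) seg_eq' => seg_eq'; first exact: seg_eq'.
by rewrite (seg_eq' (Sub _ rD) (Sub _ r'D)) // mulmxA mulmxE mulVr ?mul1mx.
Qed.

End Transfer.

Theorem lemma2p9 (R : realType) (D : diagram) (g : pt D -> 'M[R[i]]_2) :
  wf_diagram D -> is_SL2_coloring g ->
  (exists u : gap D -> 'cV[R[i]]_2, is_shadow g u) /\
  (exists f : {v : 'cV[R[i]]_2 | v != 0} ->
              {u : gap D -> 'cV[R[i]]_2 | is_shadow g u},
     bijective f).
Proof.
move=> wfD gP.
have e_neq0 : const_mx 1 != 0 :> 'cV[R[i]]_2.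
  by apply/eqP => /matrixP/(_ 0 0)/eqP; rewrite !mxE oner_eq0.
split; first by exists (shadow_of g (const_mx 1)); apply: shadow_of_shadow.
pose f (v : {v : 'cV[R[i]]_2 | v != 0}) :=
  exist (is_shadow g) (shadow_of g (val v)) (shadow_of_shadow gP wfD (valP v)).
have u0_neq0 (u : {u | is_shadow g u}) : sval u (gap0 D) != 0 by case: (svalP u).
exists f, (fun u => exist _ (sval u (gap0 D)) (u0_neq0 u)).
  by move=> v; apply: val_inj; rewrite /= shadow_of_gap0.
by move=> [u uS]; apply: eq_exist; rewrite /= -shadowE.
Qed.
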